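(* Let $R$ be a commutative ring, $I=(f_1,\dots,f_r)$, $\mathfrak a=(a_1,\dots,a_s)\subseteq I$, $g=\operatorname{grade}(I)$, and $\Phi=(c_{ij})$ an $r\times s$ matrix with $a_j=\sum_i c_{ij}f_i$. With $\Gamma_\bullet$ and $\tilde H_\bullet$ as in the context, $$\operatorname{Kitt}(\mathfrak a,I)=\mathfrak a+\langle\Gamma_\bullet\cdot\tilde H_\bullet\rangle_r=\mathfrak a+\sum_{i=\max\{0,r-s\}}^{r-g}\Gamma_{r-i}\cdot\tilde H_i .$$
   Context: $K_\bullet=K_\bullet(\mathbf f;R)$ is the Koszul DG algebra: exterior algebra over $R$ on $e_1,\dots,e_r$ with $\partial(e_i)=f_i$. Set $\zeta_j=\sum_i c_{ij}e_i$, let $\Gamma_\bullet$ be the $R$-subalgebra generated by $\zeta_1,\dots,\zeta_s$ and $Z_\bullet$ the subalgebra of Koszul cycles. $\tilde H_\bullet$ is the $R$-subalgebra of $K_\bullet$ generated by (cycle) representatives of the Koszul homology classes of $H_\bullet(\mathbf f;R)$, $\tilde H_i$ its degree-$i$ part. For graded subsets $A_\bullet,B_\bullet$ of $K_\bullet$, $\langle A_\bullet\cdot B_\bullet\rangle_r$ (resp. $A_j\cdot B_{r-j}$) is the $R$-span in $K_r$ of products $x\wedge y$ with $x\in A_j, y\in B_{r-j}$ (all $j$, resp. fixed $j$), identified with an ideal of $R$ via $K_r=Re_1\wedge\cdots\wedge e_r\cong R$. $\operatorname{Kitt}(\mathfrak a,I):=\langle\Gamma_\bullet\cdot Z_\bullet\rangle_r$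 (this ideal does not depend on the choice of generators or of $\Phi$). *)

From mathcomp Require Import all_boot all_order all_algebra.
Set Implicit Arguments. Unset Strict Implicit. Unset Printing Implicit Defensive.
Import GRing.Theory.
Local Open Scope ring_scope.

Section Koszul.
Variables (R : comPzRingType) (r : nat).

(* The exterior algebra K = /\ R^r : coefficient functions on the basis
   e_S = e_{s_1} /\ ... /\ e_{s_k}  (s_1 < ... < s_k, S = {s_1,...,s_k}). *)
Local Notation KA := {ffun {set 'I_r} -> R}.

Definition kinv (S T : {set 'I_r}) : nat :=
  #|[set p : 'I_r * 'I_r | (p.1 \in S) && (p.2 \in T) && (p.2 < p.1)%N]|.

(* e_S /\ e_T = (-1)^{kinv S T} e_{S u T} if S, T disjoint, 0 otherwise *)
Definition kwedge (x y : KA) : KA :=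
  [ffun U : {set 'I_r} => \sum_(S : {set 'I_r}) \sum_(T : {set 'I_r})
     if (S :|: T == U) && [disjoint S & T]
     then (-1) ^+ kinv S T * x S * y T else 0].

Definition kbasis (S : {set 'I_r}) : KA := [ffun U : {set 'I_r} => (U == S)%:R].
Definition kone : KA := kbasis set0.
Definition kscale (c : R) (x : KA) : KA := [ffun U : {set 'I_r} => c * x U].

(* Koszul differential: d(e_S) = sum_{i in S} (-1)^{#{j in S, j < i}} f_i e_{S\i} *)
Definition kdiff (f : 'I_r -> R) (x : KA) : KA :=
  [ffun U : {set 'I_r} => \sum_(i : 'I_r | i \notin U)
     (-1) ^+ #|[set j in U | (j < i)%N]| * f i * x (i |: U)].

Definition homog (k : nat) (x : KA) : Prop :=
  forall S : {set 'I_r}, #|S| != k -> x S = 0.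

Inductive gen_alg (G : KA -> Prop) : KA -> Prop :=
  | ga_gen x : G x -> gen_alg G x
  | ga_one : gen_alg G kone
  | ga_add x y : gen_alg G x -> gen_alg G y -> gen_alg G (x + y)
  | ga_scale (c : R) x : gen_alg G x -> gen_alg G (kscale c x)
  | ga_mul x y : gen_alg G x -> gen_alg G y -> gen_alg G (kwedge x y).

Definition gen_alg_deg (G : KA -> Prop) (k : nat) (x : KA) : Prop :=
  gen_alg G x /\ homog k x.

Definition kcycle (f : 'I_r -> R) (k : nat) (x : KA) : Prop :=
  homog k x /\ kdiff f x = 0.

Definition kzeta (s : nat) (c : 'M[R]_(r, s)) (j : 'I_s) : KA :=
  \sum_(i : 'I_r) kscale (c i j) (kbasis [set i]).

Definition Gam (s : nat) (c : 'M[R]_(r, s)) (k : nat) : KA -> Prop :=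
  gen_alg_deg (fun x => exists j, x = kzeta c j) k.

(* T is a set of (homogeneous) cycle representatives of the Koszul homology
   classes: each element is a homogeneous cycle, and every homology class of
   every degree has a representative in T. *)
Definition cycle_reps (f : 'I_r -> R) (T : KA -> Prop) : Prop :=
  (forall t, T t -> exists k, kcycle f k t) /\
  (forall k z, kcycle f k z ->
     exists t y, T t /\ homog k t /\ homog k.+1 y /\ z - t = kdiff f y).

Definition Htil (T : KA -> Prop) (k : nat) : KA -> Prop := gen_alg_deg T k.

(* coefficient of e_1 /\ ... /\ e_r, identifying K_r with R *)
Definition ktop (x : KA) : R := x [set: 'I_r].

End Koszul.

Notation KA R r := {ffun {set 'I_r} -> R}.

Definition spanR (R : comPzRingType) (P : R -> Prop) (x : R) : Prop :=
  exists (n : nat) (cf v : 'I_n -> R),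
    (forall k, P (v k)) /\ x = \sum_(k < n) cf k * v k.

Definition ideal_sum (R : comPzRingType) (P Q : R -> Prop) (x : R) : Prop :=
  exists y z, P y /\ Q z /\ x = y + z.

(* <A . B>_r = R-span in K_r = R of products x /\ y, x in A_j, y in B_{r-j} *)
Definition prod_ideal (R : comPzRingType) (r : nat) (A B : nat -> KA R r -> Prop)
  (x : R) : Prop :=
  spanR (fun y => exists (j : nat) (u w : KA R r),
           (j <= r)%N /\ A j u /\ B (r - j)%N w /\ y = ktop (kwedge u w)) x.

Definition prod_ideal_range (R : comPzRingType) (r : nat)
  (A B : nat -> KA R r -> Prop) (lo hi : nat) (x : R) : Prop :=
  spanR (fun y => exists (i : nat) (u w : KA R r),
           (lo <= i <= hi)%N /\ (i <= r)%N /\ A (r - i)%N u /\ B i w /\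
           y = ktop (kwedge u w)) x.

Definition Kitt (R : comPzRingType) (r s : nat) (f : 'I_r -> R) (c : 'M[R]_(r, s))
  : R -> Prop := prod_ideal (Gam c) (kcycle f).

Definition ideal_gen (R : comPzRingType) (xs : seq R) : R -> Prop :=
  spanR (fun v => v \in xs).

Definition Rregular (R : comPzRingType) (xs : seq R) : Prop :=
  (forall k, (k < size xs)%N -> forall y,
     ideal_gen (take k xs) (nth 0 xs k * y) -> ideal_gen (take k xs) y) /\
  ~ ideal_gen xs 1.

Definition is_grade (R : comPzRingType) (I : R -> Prop) (g : nat) : Prop :=
  (exists xs : seq R, size xs = g /\ Rregular xs /\ (forall x, x \in xs -> I x)) /\
  (forall xs : seq R, Rregular xs -> (forall x, x \in xs -> I x) -> (size xs <= g)%N).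

From mathcomp Require Import all_boot all_order all_algebra.
From mathcomp Require Import ring zify.
Set Implicit Arguments. Unset Strict Implicit. Unset Printing Implicit Defensive.
Import GRing.Theory.
Local Open Scope ring_scope.

(* Since d(zeta_j) = a_j, the Leibniz rule puts the top coefficient of
   u /\ d(y) in the ideal a for every u in Gamma.  Hence replacing a cycle by
   another representative of its homology class changes a product with Gamma
   only modulo a, and a itself is reached as a_j = top(zeta_j /\ d(e_1 /\ ... /\ e_r)).  In the sum, Gamma_{r-i} = 0
   for r - i > s because the zeta_j anticommute and square to zero, and
   H_i = 0 for i > r - g because the Koszul complex is acyclic above r - g:
   along a regular sequence x_1, ..., x_g in I, writing x_{m+1} = d(b),
   multiplication by b lifts a cycle modulo (x_1, ..., x_m) to a cycle
   modulo (x_1, ..., x_{m+1}) one degree higher, and regularity of x_{m+1}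
   brings the boundary found there back down. *)

(** * Ideals given by generators *)

Section Ideals.
Variable R : comPzRingType.
Implicit Types (J P Q : R -> Prop) (xs : seq R) (a b : R).

Definition is_ideal J :=
  [/\ J 0, forall a b, J a -> J b -> J (a + b) & forall c a, J a -> J (c * a)].

Section IdealTheory.
Variables (J : R -> Prop) (HJ : is_ideal J).

Lemma ideal0 : J 0. Proof. by case: HJ. Qed.
Lemma idealD a b : J a -> J b -> J (a + b). Proof. by case: HJ => _ + _; apply. Qed.
Lemma idealMl c a : J a -> J (c * a). Proof. by case: HJ => _ _; apply. Qed.
Lemma idealMr c a : J a -> J (a * c). Proof. by rewrite mulrC; apply: idealMl. Qed.
Lemma idealN a : J a -> J (- a). Proof. by rewrite -mulN1r; apply: idealMl. Qed.
Lemma idealB a b : J a -> J b -> J (a - b).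
Proof. by move=> Ja Jb; apply: idealD => //; apply: idealN. Qed.
Lemma ideal_big I (s : seq I) (p : pred I) (F : I -> R) :
  (forall i, p i -> J (F i)) -> J (\sum_(i <- s | p i) F i).
Proof. by apply: big_ind; [apply: ideal0 | apply: idealD]. Qed.

End IdealTheory.

Lemma spanR_gen P a : P a -> spanR P a.
Proof. by exists 1%N, (fun _ => 1), (fun _ => a); rewrite big_ord1 mul1r. Qed.

Lemma spanR_ideal P : is_ideal (spanR P).
Proof.
split.
- by exists 0%N, (fun _ => 0), (fun _ => 0); split=> [[]|]; rewrite ?big_ord0.
- move=> a b [n [ca [va [Pva ->]]]] [m [cb [vb [Pvb ->]]]].
  exists (n + m)%N, (fun k => match split k with inl i => ca i | inr i => cb i end),
    (fun k => match split k with inl i => va i | inr i => vb i end).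
  split=> [k|]; first by case: (split k).
  rewrite big_split_ord /=; congr (_ + _); apply: eq_bigr => k _.
    by rewrite (unsplitK (inl k)).
  by rewrite (unsplitK (inr k)).
- move=> c a [n [ca [va [Pva ->]]]]; exists n, (fun k => c * ca k), va.
  by split=> //; rewrite mulr_sumr; apply: eq_bigr => k _; rewrite mulrA.
Qed.

Lemma spanR_min P Q a : is_ideal Q -> (forall b, P b -> Q b) -> spanR P a -> Q a.
Proof.
move=> HQ PQ [n [ca [va [Pva ->]]]]; apply: ideal_big => // k _.
by apply: idealMl => //; apply: PQ.
Qed.

Lemma ideal_sum_ideal P Q : is_ideal P -> is_ideal Q -> is_ideal (ideal_sum P Q).
Proof.
move=> HP HQ; split.
- by exists 0, 0; rewrite addr0; split; [apply: ideal0 | split; [apply: ideal0|]].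
- move=> _ _ [y1 [z1 [Py1 [Qz1 ->]]]] [y2 [z2 [Py2 [Qz2 ->]]]].
  exists (y1 + y2), (z1 + z2); rewrite addrACA.
  by split; [apply: idealD | split; [apply: idealD|]].
- move=> c _ [y [z [Py [Qz ->]]]]; exists (c * y), (c * z); rewrite mulrDr.
  by split; [apply: idealMl | split; [apply: idealMl|]].
Qed.

Lemma ideal_suml P Q a : is_ideal Q -> P a -> ideal_sum P Q a.
Proof. by move=> HQ Pa; exists a, 0; rewrite addr0; split; [|split; [apply: ideal0|]]. Qed.
Lemma ideal_sumr P Q a : is_ideal P -> Q a -> ideal_sum P Q a.
Proof. by move=> HP Qa; exists 0, a; rewrite add0r; split; [apply: ideal0|]. Qed.

Lemma ideal_sum_min P Q J a : is_ideal J -> (forall b, P b -> J b) ->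
  (forall b, Q b -> J b) -> ideal_sum P Q a -> J a.
Proof. by move=> HJ PJ QJ [y [z [Py [Qz ->]]]]; apply: idealD; auto. Qed.

Lemma ideal_gen_nil (a : R) : ideal_gen [::] a -> a = 0.
Proof. by move=> [n [ca [va [Pva ->]]]]; apply: big1 => k _; have := Pva k. Qed.

Section TakeNth.
Variables (xs : seq R) (m : nat).
Hypothesis lt_m_xs : (m < size xs)%N.
Local Notation x := (nth 0 xs m).

Lemma ideal_gen_take_nth : ideal_gen (take m.+1 xs) x.
Proof. by apply: spanR_gen; rewrite (take_nth 0 lt_m_xs) mem_rcons mem_head. Qed.

Lemma ideal_gen_takeS a : ideal_gen (take m xs) a -> ideal_gen (take m.+1 xs) a.
Proof.
apply: spanR_min; first exact: spanR_ideal.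
move=> v xs_v; apply: spanR_gen.
by rewrite (take_nth 0 lt_m_xs) mem_rcons in_cons xs_v orbT.
Qed.

Lemma ideal_gen_takeS_split a :
  ideal_gen (take m.+1 xs) a -> exists h, ideal_gen (take m xs) (a - x * h).
Proof.
have HJ := spanR_ideal (fun v => v \in take m xs).
apply: (spanR_min (Q := fun a => exists h, ideal_gen (take m xs) (a - x * h))).
- split; first by exists 0; rewrite mulr0 subr0; apply: ideal0.
  + move=> a1 a2 [h1 J1] [h2 J2]; exists (h1 + h2).
    by rewrite mulrDr opprD addrACA; apply: idealD.
  + move=> c a1 [h J1]; exists (c * h).
    by rewrite mulrCA -mulrBr; apply: idealMl.
- move=> v; rewrite (take_nth 0 lt_m_xs) mem_rcons in_cons => /orP[/eqP ->|xs_v].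
    by exists 1; rewrite mulr1 subrr; apply: ideal0.
  by exists 0; rewrite mulr0 subr0; apply: spanR_gen.
Qed.

End TakeNth.

End Ideals.

(** * The Koszul complex *)

Section Exterior.
Variables (R : comPzRingType) (r : nat).
Local Notation KA := {ffun {set 'I_r} -> R}.
Local Notation kb := (kbasis R).
Local Notation k1 := (kone R r).
Implicit Types (x y z : KA) (S T U : {set 'I_r}) (i k : 'I_r).

Lemma kbasisE S U : kb S U = (U == S)%:R. Proof. by rewrite ffunE. Qed.

Lemma kscaleDr c x y : kscale c (x + y) = kscale c x + kscale c y.
Proof. by apply/ffunP => U; rewrite !ffunE mulrDr. Qed.
Lemma kscaleDl c d x : kscale (c + d) x = kscale c x + kscale d x.
Proof. by apply/ffunP => U; rewrite !ffunE mulrDl. Qed.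
Lemma kscaleA c d x : kscale c (kscale d x) = kscale (c * d) x.
Proof. by apply/ffunP => U; rewrite !ffunE mulrA. Qed.
Lemma kscale1 x : kscale 1 x = x.
Proof. by apply/ffunP => U; rewrite !ffunE mul1r. Qed.
Lemma kscale0 x : kscale 0 x = 0.
Proof. by apply/ffunP => U; rewrite !ffunE mul0r. Qed.
Lemma kscaler0 c : kscale c (0 : KA) = 0.
Proof. by apply/ffunP => U; rewrite !ffunE mulr0. Qed.
Lemma kscaleNr c x : kscale c (- x) = - kscale c x.
Proof. by apply/ffunP => U; rewrite !ffunE mulrN. Qed.
Lemma kscaleNl c x : kscale (- c) x = - kscale c x.
Proof. by apply/ffunP => U; rewrite !ffunE mulNr. Qed.
Lemma kscaleBr c x y : kscale c (x - y) = kscale c x - kscale c y.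
Proof. by rewrite kscaleDr kscaleNr. Qed.
Lemma kscaleN1 x : kscale (-1) x = - x.
Proof. by rewrite kscaleNl kscale1. Qed.
Lemma kscale_sumr I (s : seq I) (P : pred I) (F : I -> KA) c :
  kscale c (\sum_(j <- s | P j) F j) = \sum_(j <- s | P j) kscale c (F j).
Proof.
apply/ffunP => U; rewrite ffunE !sum_ffunE mulr_sumr.
by apply: eq_bigr => i _; rewrite ffunE.
Qed.
Lemma kscale_suml I (s : seq I) (P : pred I) (F : I -> R) x :
  kscale (\sum_(j <- s | P j) F j) x = \sum_(j <- s | P j) kscale (F j) x.
Proof.
apply/ffunP => U; rewrite ffunE !sum_ffunE mulr_suml.
by apply: eq_bigr => i _; rewrite ffunE.
Qed.

Definition klin (L : KA -> KA) :=
  (forall x y, L (x + y) = L x + L y) /\ (forall c x, L (kscale c x) = kscale c (L x)).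

Lemma klin0 L : klin L -> L 0 = 0.
Proof. by case=> _ LZ; have := LZ 0 0; rewrite !kscale0. Qed.
Lemma klin_sum L I (s : seq I) (P : pred I) (F : I -> KA) : klin L ->
  L (\sum_(j <- s | P j) F j) = \sum_(j <- s | P j) L (F j).
Proof. by move=> LL; apply: (big_morph L LL.1 (klin0 LL)). Qed.
Lemma klinN L x : klin L -> L (- x) = - L x.
Proof. by move=> LL; rewrite -kscaleN1 LL.2 kscaleN1. Qed.
Lemma klinB L x y : klin L -> L (x - y) = L x - L y.
Proof. by move=> LL; rewrite LL.1 klinN. Qed.

Lemma klin_id : klin id. Proof. by []. Qed.
Lemma klin_zero : klin (fun _ => 0).
Proof. by split=> *; rewrite ?addr0 ?kscaler0. Qed.
Lemma klin_scale c : klin (kscale c).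
Proof. by split=> *; rewrite ?kscaleDr ?kscaleA // mulrC. Qed.
Lemma klin_comp L1 L2 : klin L1 -> klin L2 -> klin (fun x => L1 (L2 x)).
Proof. by move=> H1 H2; split=> *; rewrite ?H2.1 ?H2.2 ?H1.1 ?H1.2. Qed.
Lemma klin_opp L : klin L -> klin (fun x => - L x).
Proof. by move=> H; split=> *; rewrite ?H.1 ?H.2 ?opprD ?kscaleNr. Qed.
Lemma klin_add L1 L2 : klin L1 -> klin L2 -> klin (fun x => L1 x + L2 x).
Proof.
by move=> H1 H2; split=> *; rewrite ?H2.1 ?H2.2 ?H1.1 ?H1.2 ?kscaleDr // addrACA.
Qed.
Lemma klin_sub L1 L2 : klin L1 -> klin L2 -> klin (fun x => L1 x - L2 x).
Proof. by move=> H1 H2; apply: klin_add => //; apply: klin_opp. Qed.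

Lemma kbasis_expand x : x = \sum_S kscale (x S) (kb S).
Proof.
apply/ffunP => U; rewrite sum_ffunE (bigD1 U) //= big1 ?addr0.
  by rewrite !ffunE eqxx mulr1.
by move=> S /negbTE nSU; rewrite !ffunE eq_sym nSU mulr0.
Qed.

Lemma eq_klin_basis L1 L2 : klin L1 -> klin L2 ->
  (forall S, L1 (kb S) = L2 (kb S)) -> forall x, L1 x = L2 x.
Proof.
move=> H1 H2 HB x; rewrite (kbasis_expand x) (klin_sum _ _ _ H1) (klin_sum _ _ _ H2).
by apply: eq_bigr => S _; rewrite H1.2 H2.2 HB.
Qed.

Lemma kwedgeE x y U : kwedge x y U = \sum_S \sum_T
  (if (S :|: T == U) && [disjoint S & T] then (-1) ^+ kinv S T * x S * y T else 0).
Proof. by rewrite ffunE. Qed.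

Lemma klin_kwedgel y : klin (fun x => kwedge x y).
Proof.
split=> [x z|c x]; apply/ffunP => U; rewrite !ffunE.
  rewrite -big_split; apply: eq_bigr => S _; rewrite -big_split.
  by apply: eq_bigr => T _; rewrite ffunE; case: ifP => _ /=; rewrite ?addr0 //; ring.
rewrite mulr_sumr; apply: eq_bigr => S _; rewrite mulr_sumr.
by apply: eq_bigr => T _; rewrite ffunE; case: ifP => _; rewrite ?mulr0 //; ring.
Qed.
Lemma klin_kwedger x : klin (kwedge x).
Proof.
split=> [y z|c y]; apply/ffunP => U; rewrite !ffunE.
  rewrite -big_split; apply: eq_bigr => S _; rewrite -big_split.
  by apply: eq_bigr => T _; rewrite ffunE; case: ifP => _ /=; rewrite ?addr0 // ?ffunE; ring.
rewrite mulr_sumr; apply: eq_bigr => S _; rewrite mulr_sumr.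
by apply: eq_bigr => T _; rewrite ffunE; case: ifP => _; rewrite ?mulr0 //; ring.
Qed.

Lemma kwedgeDl x y z : kwedge (x + y) z = kwedge x z + kwedge y z.
Proof. exact: (klin_kwedgel z).1. Qed.
Lemma kwedgeDr x y z : kwedge x (y + z) = kwedge x y + kwedge x z.
Proof. exact: (klin_kwedger x).1. Qed.
Lemma kwedgeZl c x y : kwedge (kscale c x) y = kscale c (kwedge x y).
Proof. exact: (klin_kwedgel y).2. Qed.
Lemma kwedgeZr c x y : kwedge x (kscale c y) = kscale c (kwedge x y).
Proof. exact: (klin_kwedger x).2. Qed.
Lemma kwedge0l y : kwedge 0 y = 0. Proof. exact: (klin0 (klin_kwedgel y)). Qed.
Lemma kwedge0r x : kwedge x 0 = 0. Proof. exact: (klin0 (klin_kwedger x)). Qed.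
Lemma kwedgeNl x y : kwedge (- x) y = - kwedge x y.
Proof. exact: (klinN _ (klin_kwedgel y)). Qed.
Lemma kwedgeBl x y z : kwedge (x - y) z = kwedge x z - kwedge y z.
Proof. exact: (klinB _ _ (klin_kwedgel z)). Qed.

Lemma sum_kronecker (F : {set 'I_r} -> R) U : \sum_S (S == U)%:R * F S = F U.
Proof.
rewrite (bigD1 U) //= eqxx mul1r big1 ?addr0 // => S /negbTE ->.
by rewrite mul0r.
Qed.

Lemma kwedge_basis S T : kwedge (kb S) (kb T) =
  if [disjoint S & T] then kscale ((-1) ^+ kinv S T) (kb (S :|: T)) else 0.
Proof.
apply/ffunP => U; rewrite ffunE.
under eq_bigr => S' _ do under eq_bigr => T' _ do rewrite !kbasisE.
transitivity (\sum_S' (S' == S)%:R * \sum_T' (T' == T)%:R *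
   (if (S' :|: T' == U) && [disjoint S' & T'] then (-1) ^+ kinv S' T' else 0 : R)).
  apply: eq_bigr => S' _; rewrite mulr_sumr; apply: eq_bigr => T' _.
  by case: ifP => _; rewrite ?mulr0 //; ring.
rewrite !sum_kronecker; case: (boolP [disjoint S & T]) => dST;
  rewrite ?andbT ?andbF /= ?ffunE // eq_sym.
by case: (U == S :|: T); rewrite ?mulr1 ?mulr0.
Qed.

Definition nbelow T i : nat := (\sum_(b in T) (b < i)%N)%N.

Lemma card_below T i : #|[set j in T | (j < i)%N]| = nbelow T i.
Proof.
rewrite -sum1_card /nbelow big_mkcond [RHS]big_mkcond; apply: eq_bigr => j _.
by rewrite !inE; case: (j \in T); case: (j < i)%N.
Qed.

Lemma kinvE S T : kinv S T = (\sum_(a in S) nbelow T a)%N.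
Proof.
rewrite /kinv -sum1_card big_mkcond /=.
transitivity (\sum_a \sum_b (((a \in S) && (b \in T) && (b < a)%N) : nat))%N.
  by rewrite pair_big /=; apply: eq_big => // p _; rewrite inE; case: (_ && _).
rewrite [RHS]big_mkcond; apply: eq_bigr => a _; case: (a \in S) => /=.
  by rewrite [RHS]big_mkcond; apply: eq_bigr => b _; case: (b \in T).
by rewrite big1.
Qed.

Lemma kinv1l i T : kinv [set i] T = nbelow T i.
Proof. by rewrite kinvE big_set1. Qed.
Lemma kinv0l T : kinv set0 T = 0%N.
Proof. by rewrite kinvE big_set0. Qed.
Lemma kinv0r T : kinv T set0 = 0%N.
Proof. by rewrite kinvE big1 // => a _; rewrite /nbelow big_set0. Qed.

Lemma sum_setU_disjoint (F : 'I_r -> nat) S T : [disjoint S & T] ->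
  (\sum_(i in S :|: T) F i = \sum_(i in S) F i + \sum_(i in T) F i)%N.
Proof. by move=> dST; rewrite -bigU //; apply: eq_bigl => i; rewrite !inE. Qed.

Lemma kinvUl S T U : [disjoint S & T] -> kinv (S :|: T) U = (kinv S U + kinv T U)%N.
Proof. by move=> dST; rewrite !kinvE sum_setU_disjoint. Qed.
Lemma kinvUr S T U : [disjoint T & U] -> kinv S (T :|: U) = (kinv S T + kinv S U)%N.
Proof.
move=> dTU; rewrite !kinvE -big_split; apply: eq_bigr => a _.
exact: sum_setU_disjoint.
Qed.

Lemma nbelowU1 i T k : i \notin T -> nbelow (i |: T) k = ((i < k)%N + nbelow T k)%N.
Proof. by move=> iT; rewrite /nbelow big_setU1. Qed.
Lemma nbelowD1 k T i : k \in T -> nbelow T i = ((k < i)%N + nbelow (T :\ k) i)%N.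
Proof. by move=> kT; rewrite -{1}(setD1K kT) nbelowU1 // setD11. Qed.

Lemma disjoint_setUl S T U :
  [disjoint S :|: T & U] = [disjoint S & U] && [disjoint T & U].
Proof. by rewrite -!setI_eq0 setIUl setU_eq0. Qed.
Lemma disjoint_setUr S T U :
  [disjoint S & T :|: U] = [disjoint S & T] && [disjoint S & U].
Proof. by rewrite -!setI_eq0 setIUr setU_eq0. Qed.

Lemma sign_sqr n : (-1) ^+ n * (-1) ^+ n = 1 :> R.
Proof. by rewrite -expr2 sqrr_sign. Qed.

Lemma sign_lt_gt i k : i != k -> (-1) ^+ (k < i)%N * (-1) ^+ (i < k)%N = -1 :> R.
Proof.
rewrite -(inj_eq val_inj) /=.
by case: ltngtP => //= _ _; rewrite ?expr0 ?expr1 ?mulr1 ?mul1r.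
Qed.

Lemma kwedge1l x : kwedge k1 x = x.
Proof.
apply: (@eq_klin_basis (kwedge k1) id (klin_kwedger _) klin_id) => T.
by rewrite kwedge_basis -setI_eq0 set0I eqxx kinv0l expr0 set0U kscale1.
Qed.
Lemma kwedge1r x : kwedge x k1 = x.
Proof.
apply: (@eq_klin_basis (fun x => kwedge x k1) id (klin_kwedgel _) klin_id) => T.
by rewrite kwedge_basis -setI_eq0 setI0 eqxx kinv0r expr0 setU0 kscale1.
Qed.

Lemma kwedgeA_basis S T U :
  kwedge (kwedge (kb S) (kb T)) (kb U) = kwedge (kb S) (kwedge (kb T) (kb U)).
Proof.
rewrite !kwedge_basis.
case dST: [disjoint S & T]; case dTU: [disjoint T & U];
rewrite ?kwedge0l ?kwedge0r ?kwedgeZl ?kwedgeZr ?kwedge_basis ?disjoint_setUl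
  ?disjoint_setUr ?dST ?dTU ?andbF ?andbT /= ?kscaler0 //;
case dSU: [disjoint S & U]; rewrite ?kscaler0 // !kscaleA setUA.
by rewrite kinvUl // kinvUr // !exprD; congr kscale; ring.
Qed.

Lemma kwedgeA x y z : kwedge (kwedge x y) z = kwedge x (kwedge y z).
Proof.
move: x; apply: (@eq_klin_basis (fun x => kwedge (kwedge x y) z)
   (fun x => kwedge x (kwedge y z))
   (klin_comp (klin_kwedgel z) (klin_kwedgel y)) (klin_kwedgel _)) => S.
move: y; apply: (@eq_klin_basis (fun y => kwedge (kwedge (kb S) y) z)
   (fun y => kwedge (kb S) (kwedge y z)) (klin_comp (klin_kwedgel z) (klin_kwedger _))
   (klin_comp (klin_kwedger _) (klin_kwedgel z))) => T.
move: z; apply: (@eq_klin_basis (fun z => kwedge (kwedge (kb S) (kb T)) z)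
   (fun z => kwedge (kb S) (kwedge (kb T) z)) (klin_kwedger _)
   (klin_comp (klin_kwedger _) (klin_kwedger _))) => U.
exact: kwedgeA_basis.
Qed.

Lemma sum_antisym (A : finType) (F : A -> A -> R) :
  (forall a, F a a = 0) -> (forall a b, F a b = - F b a) ->
  \sum_a \sum_b F a b = 0.
Proof.
move=> F0 FA.
pose G a b := if (enum_rank a < enum_rank b)%N then F a b else 0.
have FG a b : F a b = G a b - G b a.
  rewrite /G; case: ltngtP => [_|_|/val_inj/enum_rank_inj->]; last by rewrite F0 subrr.
  - by rewrite subr0.
  - by rewrite sub0r -FA.
under eq_bigr => a _ do under eq_bigr => b _ do rewrite FG.
under eq_bigr => a _ do rewrite sumrB.
by rewrite sumrB [X in _ - X]exchange_big subrr.
Qed.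

Lemma kwedge_homog1_self (v : KA) : homog 1 v -> kwedge v v = 0.
Proof.
move=> hv; apply/ffunP => U; rewrite kwedgeE ffunE.
apply: sum_antisym => [S|S T].
  case: ifP => // /andP[_ dSS].
  rewrite hv ?mulr0 //; move: dSS; rewrite -setI_eq0 setIid => /eqP ->.
  by rewrite cards0.
have [/cards1P[i ->]|hS] := boolP (#|S| == 1%N); last first.
  by rewrite (hv S hS); do 2 case: ifP => _; rewrite ?mulr0 ?mul0r ?oppr0.
have [/cards1P[k ->]|hT] := boolP (#|T| == 1%N); last first.
  by rewrite (hv T hT); do 2 case: ifP => _; rewrite ?mulr0 ?mul0r ?oppr0.
rewrite setUC disjoint_sym; case: ifP => [/andP[_ dik]|_]; last by rewrite oppr0.
have ik : i != k by move: dik; rewrite disjoints1 inE eq_sym.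
rewrite !kinv1l /nbelow !big_set1; move: ik; rewrite -(inj_eq val_inj) /=.
by case: ltngtP => //= _ _; rewrite ?expr0 ?expr1; ring.
Qed.

Definition ksig x : KA := [ffun S : {set 'I_r} => (-1) ^+ #|S| * x S].

Lemma klin_ksig : klin ksig.
Proof.
split=> [x y|c x]; apply/ffunP => U; rewrite !ffunE; first by rewrite mulrDr.
by rewrite mulrCA.
Qed.

Lemma ksig_homog n x : homog n x -> ksig x = kscale ((-1) ^+ n) x.
Proof.
move=> hx; apply/ffunP => U; rewrite !ffunE.
have [/eqP -> //|hU] := boolP (#|U| == n).
by rewrite (hx U hU) !mulr0.
Qed.

Lemma ksig_basis S : ksig (kb S) = kscale ((-1) ^+ #|S|) (kb S).
Proof.
apply/ffunP => U; rewrite !ffunE; case: (U =P S) => [->|_] //.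
by rewrite !mulr0.
Qed.

Lemma ksig_wedge_e1 i w : ksig (kwedge (kb [set i]) w) = - kwedge (kb [set i]) (ksig w).
Proof.
move: w; apply: (@eq_klin_basis (fun w => ksig (kwedge (kb [set i]) w))
  (fun w => - kwedge (kb [set i]) (ksig w))
  (klin_comp klin_ksig (klin_kwedger _))
  (klin_opp (klin_comp (klin_kwedger _) klin_ksig))) => T.
rewrite ksig_basis kwedgeZr kwedge_basis disjoints1.
have [iT|iT] /= := boolP (i \in T); first by rewrite kscaler0 (klin0 klin_ksig) oppr0.
rewrite klin_ksig.2 ksig_basis !kscaleA -kscaleNl cardsU1 iT /= add1n exprS.
by congr kscale; ring.
Qed.

Lemma kbasis_split S i : i \in S ->
  kb S = kscale ((-1) ^+ kinv [set i] (S :\ i)) (kwedge (kb [set i]) (kb (S :\ i))).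
Proof.
move=> iS; rewrite kwedge_basis disjoints1 setD11 /= kscaleA sign_sqr kscale1.
by rewrite setD1K.
Qed.

Section Differential.
Variable f : 'I_r -> R.

Lemma kdiffE x U : kdiff f x U =
  \sum_(i | i \notin U) (-1) ^+ nbelow U i * f i * x (i |: U).
Proof. by rewrite ffunE; apply: eq_bigr => i _; rewrite card_below. Qed.

Lemma klin_kdiff : klin (kdiff f).
Proof.
split=> [x y|c x]; apply/ffunP => U; rewrite !ffunE.
  by rewrite -big_split; apply: eq_bigr => i _; rewrite ffunE mulrDr.
by rewrite mulr_sumr; apply: eq_bigr => i _; rewrite ffunE; ring.
Qed.

Lemma kdiff_basis S : kdiff f (kb S) =
  \sum_(i in S) kscale ((-1) ^+ nbelow S i * f i) (kb (S :\ i)).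
Proof.
apply/ffunP => U; rewrite kdiffE sum_ffunE.
rewrite big_mkcond [RHS]big_mkcond; apply: eq_bigr => i _.
rewrite kbasisE ffunE kbasisE.
have [iS|iS] := boolP (i \in S); last first.
  case: ifP => // _; case: eqP => [E|_]; last by rewrite mulr0.
  by move: iS; rewrite -E setU11.
have [iU|iU] /= := boolP (i \in U).
  case: eqP => [E|_]; last by rewrite mulr0.
  by move: iU; rewrite E setD11.
case: (U =P S :\ i) => [->|NE].
  by rewrite setD1K // eqxx [nbelow S i](nbelowD1 _ iS) ltnn add0n.
rewrite mulr0; case: eqP => [E|]; last by rewrite mulr0.
by case: NE; rewrite -E setU1K.
Qed.

Lemma kdiff1 : kdiff f k1 = 0.
Proof. by rewrite kdiff_basis big_set0. Qed.

Lemma kdiff_e1 i : kdiff f (kb [set i]) = kscale (f i) k1.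
Proof. by rewrite kdiff_basis big_set1 /nbelow big_set1 ltnn expr0 mul1r setDv. Qed.

Lemma kdiff_wedge_e1_basis i T : kdiff f (kwedge (kb [set i]) (kb T)) =
  kscale (f i) (kb T) - kwedge (kb [set i]) (kdiff f (kb T)).
Proof.
rewrite kwedge_basis disjoints1 kdiff_basis (klin_sum _ _ _ (klin_kwedger _)).
under eq_bigr => k kT do rewrite kwedgeZr kwedge_basis disjoints1 in_setD1.
have [iT|iT] /= := boolP (i \in T).
  rewrite (klin0 klin_kdiff) (bigD1 i) //= eqxx /= big1 ?addr0; last first.
    by move=> k /andP[_ ki]; rewrite eq_sym ki /= kscaler0.
  rewrite kscaleA kinv1l setD1K // [nbelow T i](nbelowD1 _ iT) ltnn add0n.
  by rewrite mulrAC sign_sqr mul1r subrr.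
under eq_bigr => k _ do rewrite andbF /=.
rewrite klin_kdiff.2 kdiff_basis big_setU1 //= kscaleDr kscaleA.
rewrite [nbelow (i |: T) i](nbelowU1 _ iT) ltnn add0n setU1K // kinv1l mulrA.
rewrite sign_sqr mul1r; congr (_ + _).
rewrite kscale_sumr -sumrN; apply: eq_bigr => k kT.
have ik : i != k by apply: contraNneq iT => ->.
have -> : (i |: T) :\ k = i |: (T :\ k).
  by apply/setP => j; rewrite !inE; case: (j =P k) => [->|] //=; rewrite eq_sym (negbTE ik).
rewrite !kscaleA -kscaleNl kinv1l (nbelowU1 _ iT) [nbelow T i](nbelowD1 _ kT) !exprD.
congr kscale; transitivity ((-1) ^+ (k < i)%N * (-1) ^+ (i < k)%N *
  ((-1) ^+ nbelow (T :\ k) i * (-1) ^+ nbelow T k * f k) : R); first by ring.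
by rewrite sign_lt_gt //; ring.
Qed.

Lemma kdiff_wedge_e1 i y : kdiff f (kwedge (kb [set i]) y) =
  kscale (f i) y - kwedge (kb [set i]) (kdiff f y).
Proof.
move: y; apply: (@eq_klin_basis (fun y => kdiff f (kwedge (kb [set i]) y))
  (fun y => kscale (f i) y - kwedge (kb [set i]) (kdiff f y))
  (klin_comp klin_kdiff (klin_kwedger _))
  (klin_sub (klin_scale _) (klin_comp (klin_kwedger _) klin_kdiff))).
exact: kdiff_wedge_e1_basis.
Qed.

Lemma kdiff_wedge_basis n S y : #|S| = n ->
  kdiff f (kwedge (kb S) y) =
  kwedge (kdiff f (kb S)) y + kwedge (ksig (kb S)) (kdiff f y).
Proof.
elim: n S y => [|n IH] S y hS.
  rewrite (cards0_eq hS) kdiff1 kwedge0l add0r ksig_basis cards0 expr0 kscale1.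
  by rewrite !kwedge1l.
have /card_gt0P [i iS] : (0 < #|S|)%N by rewrite hS.
have hS' : #|S :\ i| = n by move: hS; rewrite (cardsD1 i S) iS add1n => -[].
rewrite (kbasis_split iS) kwedgeZl klin_kdiff.2 kwedgeA kdiff_wedge_e1 IH //.
rewrite klin_kdiff.2 kdiff_wedge_e1 klin_ksig.2 ksig_wedge_e1.
rewrite !kwedgeZl kwedgeBl kwedgeNl kwedgeZl !kwedgeA kwedgeDr.
by rewrite -kscaleDr opprD addrA.
Qed.

Lemma kdiff_wedge x y : kdiff f (kwedge x y) =
  kwedge (kdiff f x) y + kwedge (ksig x) (kdiff f y).
Proof.
move: x; apply: (@eq_klin_basis (fun x => kdiff f (kwedge x y))
  (fun x => kwedge (kdiff f x) y + kwedge (ksig x) (kdiff f y))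
  (klin_comp klin_kdiff (klin_kwedgel y))
  (klin_add (klin_comp (klin_kwedgel y) klin_kdiff)
            (klin_comp (klin_kwedgel _) klin_ksig))) => S.
exact: kdiff_wedge_basis.
Qed.

Lemma kdiffK_basis n S : #|S| = n -> kdiff f (kdiff f (kb S)) = 0.
Proof.
elim: n S => [|n IH] S hS; first by rewrite (cards0_eq hS) kdiff1 (klin0 klin_kdiff).
have /card_gt0P [i iS] : (0 < #|S|)%N by rewrite hS.
have hS' : #|S :\ i| = n by move: hS; rewrite (cardsD1 i S) iS add1n => -[].
rewrite (kbasis_split iS) !klin_kdiff.2 kdiff_wedge_e1 (klinB _ _ klin_kdiff).
by rewrite klin_kdiff.2 kdiff_wedge_e1 IH // kwedge0r subr0 subrr kscaler0.
Qed.

Lemma kdiffK x : kdiff f (kdiff f x) = 0.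
Proof.
move: x; apply: (@eq_klin_basis (fun x => kdiff f (kdiff f x)) (fun _ => 0)
  (klin_comp klin_kdiff klin_kdiff) klin_zero) => S.
exact: kdiffK_basis.
Qed.

End Differential.

Lemma homog0 n : homog n (0 : KA). Proof. by move=> S _; rewrite ffunE. Qed.
Lemma homogD n x y : homog n x -> homog n y -> homog n (x + y).
Proof. by move=> hx hy S hS; rewrite ffunE hx // hy // addr0. Qed.
Lemma homogZ n c x : homog n x -> homog n (kscale c x).
Proof. by move=> hx S hS; rewrite ffunE hx // mulr0. Qed.
Lemma homog_sum n I (s : seq I) (P : pred I) (F : I -> KA) :
  (forall j, P j -> homog n (F j)) -> homog n (\sum_(j <- s | P j) F j).
Proof. by apply: big_ind; [apply: homog0 | apply: homogD]. Qed.
Lemma homog_basis S : homog #|S| (kb S).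
Proof. by move=> U hU; rewrite kbasisE; case: (U =P S) hU => [->|]; rewrite ?eqxx. Qed.
Lemma homog_e1 i : homog 1 (kb [set i]).
Proof. by rewrite -(cards1 i); apply: homog_basis. Qed.

Lemma homog_wedge m n x y : homog m x -> homog n y -> homog (m + n) (kwedge x y).
Proof.
move=> hx hy U hU; rewrite kwedgeE big1 // => S _; rewrite big1 // => T _.
case: ifP => // /andP[/eqP hST dST].
have [/eqP hSm|hSm] := boolP (#|S| == m); last by rewrite (hx S hSm) mulr0 mul0r.
have [/eqP hTn|hTn] := boolP (#|T| == n); last by rewrite (hy T hTn) mulr0.
move: hU; rewrite -hST cardsU (disjoint_setI0 dST) cards0 subn0 hSm hTn.
by rewrite eqxx.
Qed.

Lemma homog_kdiff f n x : homog n x -> homog n.-1 (kdiff f x).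
Proof.
move=> hx U hU; rewrite kdiffE big1 // => i iU.
by rewrite hx ?mulr0 // cardsU1 iU add1n; apply: contra hU => /eqP <-.
Qed.

Lemma homog_gt n x : (r < n)%N -> homog n x -> x = 0.
Proof.
move=> hn hx; apply/ffunP => S; rewrite ffunE; apply: hx.
apply: contraTneq hn => <-; rewrite -leqNgt -[X in (_ <= X)%N]card_ord.
exact: max_card.
Qed.

Lemma ktopD x y : ktop (x + y) = ktop x + ktop y. Proof. by rewrite /ktop ffunE. Qed.
Lemma ktopZ c x : ktop (kscale c x) = c * ktop x. Proof. by rewrite /ktop ffunE. Qed.
Lemma ktop0 : ktop (0 : KA) = 0. Proof. by rewrite /ktop ffunE. Qed.
Lemma ktop_kdiff f x : ktop (kdiff f x) = 0.
Proof. by rewrite /ktop kdiffE big1 // => i; rewrite in_setT. Qed.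

Definition kcoef_in (J : R -> Prop) x := forall S, J (x S).

Section CoefIdeal.
Variables (J : R -> Prop) (HJ : is_ideal J).

Lemma kcoef_in0 : kcoef_in J 0. Proof. by move=> S; rewrite ffunE; apply: ideal0. Qed.
Lemma kcoef_inD x y : kcoef_in J x -> kcoef_in J y -> kcoef_in J (x + y).
Proof. by move=> hx hy S; rewrite ffunE; apply: idealD. Qed.
Lemma kcoef_inB x y : kcoef_in J x -> kcoef_in J y -> kcoef_in J (x - y).
Proof. by move=> hx hy S; rewrite !ffunE; apply: idealB. Qed.
Lemma kcoef_inZ c x : kcoef_in J x -> kcoef_in J (kscale c x).
Proof. by move=> hx S; rewrite ffunE; apply: idealMl. Qed.
Lemma kcoef_in_scale c x : J c -> kcoef_in J (kscale c x).
Proof. by move=> Jc S; rewrite ffunE; apply: idealMr. Qed.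
Lemma kcoef_in_wedgel x y : kcoef_in J x -> kcoef_in J (kwedge x y).
Proof.
move=> hx U; rewrite kwedgeE; apply: ideal_big => // S _; apply: ideal_big => // T _.
by case: ifP => _; [rewrite mulrAC; apply: idealMl | apply: ideal0].
Qed.
Lemma kcoef_in_wedger x y : kcoef_in J y -> kcoef_in J (kwedge x y).
Proof.
move=> hy U; rewrite kwedgeE; apply: ideal_big => // S _; apply: ideal_big => // T _.
by case: ifP => _; [apply: idealMl | apply: ideal0].
Qed.
Lemma kcoef_in_kdiff f x : kcoef_in J x -> kcoef_in J (kdiff f x).
Proof. by move=> hx U; rewrite kdiffE; apply: ideal_big => // i _; apply: idealMl. Qed.

End CoefIdeal.

Lemma gen_alg_kdiff f (G : KA -> Prop) (J : R -> Prop) : is_ideal J ->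
  (forall t, G t -> kcoef_in J (kdiff f t)) ->
  forall x, gen_alg G x -> kcoef_in J (kdiff f x).
Proof.
move=> HJ HG x; elim=> {x} [t Gt||x y _ hx _ hy|c x _ hx|x y _ hx _ hy].
- exact: HG.
- by rewrite kdiff1; apply: kcoef_in0.
- by rewrite (klin_kdiff f).1; apply: kcoef_inD.
- by rewrite (klin_kdiff f).2; apply: kcoef_inZ.
- rewrite kdiff_wedge; apply: kcoef_inD => //.
    exact: kcoef_in_wedgel.
  exact: kcoef_in_wedger.
Qed.

Lemma kcoef_in_nil x : kcoef_in (ideal_gen [::]) x -> x = 0.
Proof. by move=> hx; apply/ffunP => S; rewrite ffunE; apply: ideal_gen_nil. Qed.

Lemma ktop_wedge_kdiff f (J : R -> Prop) n u y : is_ideal J ->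
  homog n u -> kcoef_in J (kdiff f u) -> J (ktop (kwedge u (kdiff f y))).
Proof.
move=> HJ hu Jdu.
have := ktop_kdiff f (kwedge u y).
rewrite kdiff_wedge ktopD (ksig_homog hu) kwedgeZl ktopZ => /eqP.
rewrite addr_eq0 => /eqP Eneg.
have -> : ktop (kwedge u (kdiff f y)) = (-1) ^+ n * - ktop (kwedge (kdiff f u) y).
  by rewrite Eneg opprK mulrA sign_sqr mul1r.
by apply: idealMl => //; apply: idealN => //; apply: kcoef_in_wedgel.
Qed.

(** * The subalgebra generated by the zeta_j *)

Section Gamma.
Variables (s : nat) (c : 'M[R]_(r, s)).
Local Notation zeta := (kzeta c).

Lemma homog_kzeta j : homog 1 (zeta j).
Proof. by apply: homog_sum => i _; apply/homogZ/homog_e1. Qed.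

Lemma kdiff_kzeta f j : kdiff f (zeta j) = kscale (\sum_(i < r) c i j * f i) k1.
Proof.
rewrite /kzeta (klin_sum _ _ _ (klin_kdiff f)) kscale_suml.
by apply: eq_bigr => i _; rewrite (klin_kdiff f).2 kdiff_e1 kscaleA.
Qed.

Lemma kzeta_sqr j : kwedge (zeta j) (zeta j) = 0.
Proof. exact/kwedge_homog1_self/homog_kzeta. Qed.

Lemma kzeta_anticomm (j k : 'I_s) : kwedge (zeta j) (zeta k) = - kwedge (zeta k) (zeta j).
Proof.
have := kwedge_homog1_self (homogD (homog_kzeta j) (homog_kzeta k)).
rewrite kwedgeDl !kwedgeDr !kzeta_sqr add0r addr0 => /eqP.
by rewrite addr_eq0 => /eqP.
Qed.

Definition kzeta_prod (l : seq 'I_s) : KA := foldr (fun j => kwedge (zeta j)) k1 l.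

Lemma kzeta_prod_cat l1 l2 :
  kwedge (kzeta_prod l1) (kzeta_prod l2) = kzeta_prod (l1 ++ l2).
Proof. by elim: l1 => [|j l IH] /=; rewrite ?kwedge1l // kwedgeA IH. Qed.

Lemma homog_kzeta_prod l : homog (size l) (kzeta_prod l).
Proof.
elim: l => [|j l IH] /=; first by rewrite -(cards0 'I_r); apply: homog_basis.
exact: homog_wedge (homog_kzeta j) IH.
Qed.

Lemma kzeta_prod_mem j l : j \in l -> kwedge (zeta j) (kzeta_prod l) = 0.
Proof.
elim: l => [|k l IH] //=; rewrite in_cons => /orP [/eqP ->|jl].
  by rewrite -kwedgeA kzeta_sqr kwedge0l.
by rewrite -kwedgeA kzeta_anticomm kwedgeNl kwedgeA IH // kwedge0r oppr0.
Qed.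

Lemma kzeta_prod_nuniq l : ~~ uniq l -> kzeta_prod l = 0.
Proof.
elim: l => [|j l IH] //=; rewrite negb_and negbK => /orP [jl|nu].
  exact: kzeta_prod_mem.
by rewrite IH // kwedge0r.
Qed.

Lemma gen_alg_kzeta_expand x : gen_alg (fun y => exists j, y = zeta j) x ->
  exists ps : seq (R * seq 'I_s), x = \sum_(p <- ps) kscale p.1 (kzeta_prod p.2).
Proof.
elim=> {x} [_ [j ->]||x y _ [ps1 ->] _ [ps2 ->]|d x _ [ps ->]|x y _ [ps1 ->] _ [ps2 ->]].
- by exists [:: (1, [:: j])]; rewrite big_seq1 kscale1 /= kwedge1r.
- by exists [:: (1, [::])]; rewrite big_seq1 kscale1.
- by exists (ps1 ++ ps2); rewrite big_cat.
- exists [seq (d * p.1, p.2) | p <- ps]; rewrite big_map kscale_sumr.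
  by apply: eq_bigr => p _; rewrite kscaleA.
- exists [seq (p.1 * q.1, p.2 ++ q.2) | p <- ps1, q <- ps2].
  rewrite big_allpairs_dep (klin_sum _ _ _ (klin_kwedgel _)); apply: eq_bigr => p _.
  rewrite (klin_sum _ _ _ (klin_kwedger _)); apply: eq_bigr => q _.
  by rewrite kwedgeZl kwedgeZr kzeta_prod_cat kscaleA.
Qed.

Lemma Gam_gt n x : (s < n)%N -> Gam c n x -> x = 0.
Proof.
move=> hn [/gen_alg_kzeta_expand [ps ->] hx]; apply/ffunP => S; rewrite [RHS]ffunE.
have [/eqP hS|hS] := boolP (#|S| == n); last exact: hx.
rewrite sum_ffunE big1 // => [[d l]] _; rewrite ffunE /=.
have [ul|nul] := boolP (uniq l); last by rewrite kzeta_prod_nuniq // ffunE mulr0.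
rewrite homog_kzeta_prod ?mulr0 // hS; apply: contraTneq hn => ->.
by rewrite -leqNgt -(card_uniqP ul) -[X in (_ <= X)%N]card_ord max_card.
Qed.

Lemma Gam_kdiff f (a : 'I_s -> R) n u :
  (forall j, a j = \sum_(i < r) c i j * f i) ->
  Gam c n u -> kcoef_in (spanR (fun v => exists j, v = a j)) (kdiff f u).
Proof.
move=> Hac [gu _]; apply: gen_alg_kdiff gu; first exact: spanR_ideal.
move=> _ [j ->]; rewrite kdiff_kzeta -Hac; apply: kcoef_in_scale.
  exact: spanR_ideal.
by apply: spanR_gen; exists j.
Qed.

End Gamma.

(** * Vanishing of Koszul homology above r - grade *)

Section Acyclicity.
Variable f : 'I_r -> R.
Local Notation I := (spanR (fun v => exists i, v = f i)).

Lemma kdiff_onto_ideal a : I a -> exists b, homog 1 b /\ kdiff f b = kscale a k1.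
Proof.
apply: (spanR_min (Q := fun a => exists b, homog 1 b /\ kdiff f b = kscale a k1)).
- split.
  + by exists 0; rewrite (klin0 (klin_kdiff f)) kscale0; split=> //; apply: homog0.
  + move=> a1 a2 [b1 [h1 d1]] [b2 [h2 d2]]; exists (b1 + b2).
    by rewrite (klin_kdiff f).1 d1 d2 kscaleDl; split=> //; apply: homogD.
  + move=> d a1 [b1 [h1 d1]]; exists (kscale d b1).
    by rewrite (klin_kdiff f).2 d1 kscaleA; split=> //; apply: homogZ.
- by move=> _ [i ->]; exists (kb [set i]); rewrite kdiff_e1; split=> //; apply: homog_e1.
Qed.

(* H_n(f; R/J) = 0 *)
Definition kacyclic_mod (J : R -> Prop) n := forall z, homog n z ->
  kcoef_in J (kdiff f z) -> exists p, kcoef_in J (z - kdiff f p).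

Lemma kacyclic_mod_gt J n : is_ideal J -> (r < n)%N -> kacyclic_mod J n.
Proof.
move=> HJ hn z /(homog_gt hn) -> _; exists 0.
by rewrite (klin0 (klin_kdiff f)) subr0; apply: kcoef_in0.
Qed.

Lemma kcoef_in_cancel (J : R -> Prop) a z :
  (forall b, J (a * b) -> J b) -> kcoef_in J (kscale a z) -> kcoef_in J z.
Proof. by move=> Ja Jz S; apply: Ja; have := Jz S; rewrite ffunE. Qed.

Lemma kcoef_in_split (J J' : R -> Prop) a q :
  (forall b, J' b -> exists h, J (b - a * h)) -> kcoef_in J' q ->
  exists h, kcoef_in J (q - kscale a h).
Proof.
move=> J'J J'q; have /fin_all_exists [h Jh] S := J'J _ (J'q S).
by exists [ffun S => h S] => S; rewrite !ffunE.
Qed.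

Lemma kacyclic_mod_step (J J' : R -> Prop) a n :
  is_ideal J -> is_ideal J' -> I a -> (forall b, J (a * b) -> J b) ->
  J' a -> (forall b, J b -> J' b) -> (forall b, J' b -> exists h, J (b - a * h)) ->
  kacyclic_mod J' n.+1 -> kacyclic_mod J n.
Proof.
move=> HJ HJ' Ia a_reg J'a JJ' J'J acyc' z hz Jdz.
have [b [hb db]] := kdiff_onto_ideal Ia.
have dbz : kdiff f (kwedge b z) = kscale a z - kwedge b (kdiff f z).
  rewrite kdiff_wedge db kwedgeZl kwedge1l (ksig_homog hb) kwedgeZl expr1.
  by rewrite kscaleN1.
have J'dbz : kcoef_in J' (kdiff f (kwedge b z)).
  rewrite dbz; apply: kcoef_inB => //; first exact: kcoef_in_scale.
  by apply: kcoef_in_wedger => // S; apply: JJ'.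
have [p J'q] := acyc' _ (homog_wedge hb hz) J'dbz.
have [h Jqh] := kcoef_in_split J'J J'q.
exists h; apply: (kcoef_in_cancel a_reg).
have -> : kscale a (z - kdiff f h) =
    kdiff f (kwedge b z - kdiff f p - kscale a h) + kwedge b (kdiff f z).
  rewrite !(klinB _ _ (klin_kdiff f)) kdiffK subr0 (klin_kdiff f).2 dbz.
  by rewrite kscaleBr addrAC subrK.
by apply: kcoef_inD => //; [apply: kcoef_in_kdiff | apply: kcoef_in_wedger].
Qed.

Lemma kacyclic_mod_regular (xs : seq R) :
  (forall m, (m < size xs)%N -> forall b,
     ideal_gen (take m xs) (nth 0 xs m * b) -> ideal_gen (take m xs) b) ->
  (forall a, a \in xs -> I a) ->
  forall n m d, (m + n)%N = size xs -> (r < d + n)%N ->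
  kacyclic_mod (ideal_gen (take m xs)) d.
Proof.
move=> xs_reg xs_I; elim=> [|n IH] m d hmn hd.
  by apply: kacyclic_mod_gt; [apply: spanR_ideal | rewrite -(addn0 d)].
have hm : (m < size xs)%N by rewrite -hmn addnS ltnS leq_addr.
apply: (kacyclic_mod_step (J' := ideal_gen (take m.+1 xs)) (a := nth 0 xs m)).
- exact: spanR_ideal.
- exact: spanR_ideal.
- exact/xs_I/mem_nth.
- exact: xs_reg.
- exact: ideal_gen_take_nth.
- exact: ideal_gen_takeS.
- exact: ideal_gen_takeS_split.
- by apply: IH; rewrite ?addSnnS // addSn -addnS.
Qed.

Lemma kcycle_boundary (xs : seq R) n z : Rregular xs -> (forall a, a \in xs -> I a) ->
  (r < n + size xs)%N -> kcycle f n z -> exists p, z = kdiff f p.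
Proof.
move=> [xs_reg _] xs_I hn [hz dz].
have [|p Jp] := kacyclic_mod_regular xs_reg xs_I (add0n _) hn hz.
  by rewrite dz; apply: kcoef_in0; apply: spanR_ideal.
by exists p; apply/eqP; rewrite -subr_eq0; apply/eqP/kcoef_in_nil; rewrite -(take0 xs).
Qed.

End Acyclicity.

End Exterior.

(** * Kitt ideals *)

Section ProductIdeals.
Variables (R : comPzRingType) (r : nat).
Implicit Types (A B C : nat -> KA R r -> Prop).

Lemma prod_ideal_mono A B C x : (forall n w, B n w -> C n w) ->
  prod_ideal A B x -> prod_ideal A C x.
Proof.
move=> BC; apply: spanR_min; first exact: spanR_ideal.
move=> _ [j [u [w [hj [Au [Bw ->]]]]]]; apply: spanR_gen.
by exists j, u, w; split=> //; split=> //; split=> //; apply: BC.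
Qed.

Lemma prod_ideal_range_sub A B lo hi x :
  prod_ideal_range A B lo hi x -> prod_ideal A B x.
Proof.
apply: spanR_min; first exact: spanR_ideal.
move=> _ [i [u [w [_ [hi_r [Au [Bw ->]]]]]]]; apply: spanR_gen.
by exists (r - i)%N, u, w; rewrite subKn // leq_subr.
Qed.

End ProductIdeals.

Section KittIdeal.
Variables (R : comPzRingType) (r s : nat) (f : 'I_r -> R) (a : 'I_s -> R).
Variables (c : 'M[R]_(r, s)) (T : KA R r -> Prop).
Hypothesis Hac : forall j, a j = \sum_(i < r) c i j * f i.
Hypothesis HT : cycle_reps f T.
Local Notation aI := (spanR (fun v => exists j, v = a j)).
Local Notation GH := (prod_ideal (Gam c) (Htil T)).

Lemma Kitt_ideal : is_ideal (Kitt f c). Proof. exact: spanR_ideal. Qed.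

Lemma Htil_kcycle n w : Htil T n w -> kcycle f n w.
Proof.
case=> gw hw; split=> //; apply: kcoef_in_nil.
apply: (gen_alg_kdiff (spanR_ideal _)) gw => t /HT.1 [k [_ ->]].
by apply: kcoef_in0; apply: spanR_ideal.
Qed.

Lemma a_sub_Kitt x : aI x -> Kitt f c x.
Proof.
apply: spanR_min; first exact: Kitt_ideal.
move=> _ [j ->]; set e := kbasis R [set: 'I_r].
have hz := homog_kzeta c j.
have -> : a j = ktop (kwedge (kzeta c j) (kdiff f e)).
  have := ktop_kdiff f (kwedge (kzeta c j) e).
  rewrite kdiff_wedge kdiff_kzeta -Hac kwedgeZl kwedge1l (ksig_homog hz).
  rewrite kwedgeZl ktopD !ktopZ /ktop kbasisE eqxx mulr1 expr1 mulN1r.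
  by move/eqP; rewrite subr_eq0 => /eqP.
have [r0|r_gt0] := leqP r 0.
  by rewrite (homog_gt _ hz) ?kwedge0l ?ktop0; [apply: ideal0 Kitt_ideal | lia].
apply: spanR_gen; exists 1%N, (kzeta c j), (kdiff f e); split=> //.
split; first by split=> //; apply: ga_gen; exists j.
split=> //; split; last exact: kdiffK.
by have := homog_kdiff f (@homog_basis R r [set: 'I_r]); rewrite cardsT card_ord subn1.
Qed.

Lemma Kitt_sub_a_GH x : Kitt f c x -> ideal_sum aI GH x.
Proof.
have HaGH : is_ideal (ideal_sum aI GH) := ideal_sum_ideal (spanR_ideal _) (spanR_ideal _).
apply: spanR_min; first exact: HaGH.
move=> _ [j [u [z [hj [Gu [zcyc ->]]]]]].
have [t [y [Tt [ht [hy /eqP]]]]] := HT.2 _ _ zcyc.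
rewrite subr_eq => /eqP ->; rewrite kwedgeDr ktopD; apply: (idealD HaGH).
  apply: ideal_suml; first exact: spanR_ideal.
  exact: ktop_wedge_kdiff (spanR_ideal _) Gu.2 (Gam_kdiff Hac Gu).
apply: ideal_sumr; first exact: spanR_ideal.
by apply: spanR_gen; exists j, u, t; do 3!split=> //; split=> //; apply: ga_gen.
Qed.

Lemma GH_sub_a_range g x : is_grade (spanR (fun v => exists i, v = f i)) g ->
  GH x -> ideal_sum aI (prod_ideal_range (Gam c) (Htil T) (r - s) (r - g)) x.
Proof.
move=> [[xs [size_xs [xs_reg xs_I]]] _].
have HaR : is_ideal (ideal_sum aI (prod_ideal_range (Gam c) (Htil T) (r - s) (r - g))).
  exact: ideal_sum_ideal (spanR_ideal _) (spanR_ideal _).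
apply: spanR_min; first exact: HaR.
move=> _ [j [u [w [hj [Gu [Hw ->]]]]]].
have [s_lt_j|j_le_s] := ltnP s j.
  by rewrite (Gam_gt s_lt_j Gu) kwedge0l ktop0; apply: ideal0 HaR.
have [g_big|g_small] := ltnP r (r - j + g).
  have [|p ->] := kcycle_boundary xs_reg xs_I _ (Htil_kcycle Hw); first by rewrite size_xs.
  apply: ideal_suml; first exact: spanR_ideal.
  exact: ktop_wedge_kdiff (spanR_ideal _) Gu.2 (Gam_kdiff Hac Gu).
apply: ideal_sumr; first exact: spanR_ideal.
apply: spanR_gen; exists (r - j)%N, u, w; rewrite subKn //.
by split; [apply/andP; split; lia | rewrite leq_subr].
Qed.

End KittIdeal.

Theorem theorem4p22 (R : comPzRingType) (r s : nat) (f : 'I_r -> R)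
  (a : 'I_s -> R) (c : 'M[R]_(r, s)) (g : nat)
  (Hac : forall j : 'I_s, a j = \sum_(i < r) c i j * f i)
  (Hg : is_grade (spanR (fun v => exists i, v = f i)) g)
  (T : KA R r -> Prop) (HT : cycle_reps f T) :
  let aI := spanR (fun v => exists j, v = a j) in
  (forall x, Kitt f c x <-> ideal_sum aI (prod_ideal (Gam c) (Htil T)) x) /\
  (forall x, Kitt f c x <->
     ideal_sum aI (prod_ideal_range (Gam c) (Htil T) (r - s) (r - g)) x).
Proof.
move=> aI.
have GH_sub_Kitt x : prod_ideal (Gam c) (Htil T) x -> Kitt f c x.
  exact: prod_ideal_mono (Htil_kcycle HT).
split=> x; split.
- exact: Kitt_sub_a_GH.
- exact: ideal_sum_min (Kitt_ideal _ _) (a_sub_Kitt Hac) GH_sub_Kitt.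
- move/(Kitt_sub_a_GH Hac HT).
  apply: ideal_sum_min; first exact: ideal_sum_ideal (spanR_ideal _) (spanR_ideal _).
    by move=> y; apply: ideal_suml (spanR_ideal _).
  by move=> y; apply: (GH_sub_a_range Hac HT (x := y) Hg).
- apply: ideal_sum_min (Kitt_ideal _ _) (a_sub_Kitt Hac) _ => y.
  by move/prod_ideal_range_sub; apply: GH_sub_Kitt.
Qed.
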